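(* Let $(D,x,y)$ be an index-$2$ basic decorated resolution configuration such that neither arc of $D$ is an $\eta$-arc, and let $k=\#\{(E,z):(D,y)\prec(E,z)\prec(s(D),x)\}$ (strict inequalities). Then at least one of the following holds: (1) $D$ has a leaf or a coleaf, and $k=2$; (2) the graph $G(D)$ has exactly two vertices and two edges, each edge joining the two distinct vertices, and $k=2$; (3) $Z(D)$ consists of a single circle, both arcs of $D$ are $\Delta$-arcs, neither arc is a coleaf (such $D$ is called a butterfly configuration), and $k=4$; moreover in this case the unique circle of $D$ is labeled $x_+$ by $y$ and the unique circle of $s(D)$ is labeled $x_-$ by $x$.
   Context: A resolution configuration $D=(Z(D),A(D))$ consists of a finite set $Z(D)$ of circles immersed in $S^2$ (union has only transverse double points) and a finite totally ordered set $A(D)$ of disjoint embedded arcs meeting the circles exactly in their endpoints; its index is $|A(D)|$; it is basic if every circle meets an arc. Surgery $s_A(D)$ along $A$: in a small disk around $A$ meeting the circles in segments $\alpha$ (ends $z,w$) and $\beta$ (ends $x,y$), $z,x$ on one side of $A$, replace $\alpha\cup\beta$ by strands $z$–$y$ and $x$–$w$ crossing once; arcs become $A(D)\setminus\{A\}$; $s(D)$ is surgery along all arcs. $A$ is an $\eta$-, $\Delta$-, or $m$-arc according as surgery changes the number of circles by $0,+1,-1$. $G(D)$: vertex per circle, edge per arc (joining the circles containing its endpoints; an arc with both ends on one circle gives a loop). A leaf is a circle of degree $1$ in $G(D)$. The dual configuration $D^*$ has circles $Z(s(D))$ and, for each $A\in A(D)$, a dual arc $A^*$: a small arc parallel to $A$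 with endpoints on the two strands created by surgery along $A$. A coleaf of $D$ is an arc $A$ such that one endpoint of $A^*$ lies on a leaf of $D^*$. Labeled configurations, partial order and decorated configurations: a labeling assigns $x_+$ or $x_-$ to each circle; $(E,y)\prec(D,x)$ is generated by: $D=s_A(E)$ for a single arc $A$, $x,y$ agree on circles not meeting $\partial A$, and for a $\Delta$-arc splitting $Z_i$ into $Z_j,Z_k$: $y(Z_i)=x(Z_j)=x(Z_k)=x_-$ or ($y(Z_i)=x_+$, $\{x(Z_j),x(Z_k)\}=\{x_+,x_-\}$); for an $m$-arc merging $Z_i,Z_j$ into $Z_k$: $y(Z_i)=y(Z_j)=x(Z_k)=x_+$ or ($\{y(Z_i),y(Z_j)\}=\{x_+,x_-\}$, $x(Z_k)=x_-$); no relation for $\eta$-arcs; then take the transitive closure. A decorated resolution configuration $(D,x,y)$ has $x$ labeling $Z(s(D))$, $y$ labeling $Z(D)$, with $(D,y)\preceq(s(D),x)$. Labeled configurations $(E,z)$ between $(D,y)$ and $(s(D),x)$ have $E=s_{A'}(D)$ for $A'\subseteq A(D)$. *)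

From HB Require Import structures.
From mathcomp Require Import all_boot.
Set Implicit Arguments. Unset Strict Implicit. Unset Printing Implicit Defensive.

(* A port (A, e, s) is one of the four ends of the two circle segments
   inside a small disk around arc A : e = endpoint of A (false = endpoint 0,
   true = endpoint 1) through which the segment passes, s = side of A on
   which the end lies (false = the side of z and x, true = the side of w, y).
   So z = (A,0,0), w = (A,0,1), x = (A,1,0), y = (A,1,1). *)
Notation port n := ('I_n * bool * bool)%type.

(* A resolution configuration with n (totally ordered) arcs 'I_n:
   - nfree: the number of circles meeting no arc;
   - outer: the fixed-point free involution on ports recording which ports
     are joined by the circle segments outside the disks around the arcs. *)
Record config (n : nat) := Config {
  nfree : nat;
  outer : port n -> port n;
  outer_invol : forall p, outer (outer p) = p;
  outer_fpf : forall p, outer p != p }.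

Definition node n (D : config n) := (port n + 'I_(nfree D))%type.
HB.instance Definition _ n (D : config n) :=
  Finite.copy (node D) (port n + 'I_(nfree D))%type.

Section Defs.
Variables (n : nat) (D : config n).

(* Inside the disk around A: before surgery z-w and x-y, after surgery
   along A: z-y and x-w.  S is the set of arcs already surgered. *)
Definition inner (S : {set 'I_n}) (p : port n) : port n :=
  let: (A, e, s) := p in if A \in S then (A, ~~ e, ~~ s) else (A, e, ~~ s).

Definition sedge (S : {set 'I_n}) : rel (port n) :=
  fun p q => (q == outer D p) || (q == inner S p).

(* u, v lie on the same circle of s_S(D). *)
Definition nconn (S : {set 'I_n}) : rel (node D) := fun u v =>
  match u, v with
  | inl p, inl q => connect (sedge S) p q
  | inr i, inr j => i == j
  | _, _ => false
  end.

Definition circle S (u : node D) : {set node D} := [set v | nconn S u v].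
Definition circles S : {set {set node D}} := [set circle S u | u : node D].
Definition ncirc S := #|circles S|.

(* In s_S(D): for A \notin S, the point of the circles at endpoint e of A;
   for A \in S, the endpoint of the dual arc A^* lying on the new strand
   z-y (e = false) or x-w (e = true). *)
Definition endpt (A : 'I_n) (e : bool) : node D := inl (A, e, false).

Definition Delta_arc S A := ncirc (A |: S) == (ncirc S).+1.
Definition m_arc S A := (ncirc (A |: S)).+1 == ncirc S.
Definition eta_arc S A := ncirc (A |: S) == ncirc S.

(* degree of a circle C of D (resp. of s(D)) in G(D) (resp. G(D^* ));
   a loop counts twice *)
Definition deg (C : {set node D}) :=
  #|[set ae : 'I_n * bool | endpt ae.1 ae.2 \in C]|.
Definition is_leaf_in S C := (C \in circles S) && (deg C == 1).
Definition has_leaf := [exists C, is_leaf_in set0 C].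
Definition is_coleaf A := [exists e, is_leaf_in setT (circle setT (endpt A e))].
Definition has_coleaf := [exists A, is_coleaf A].

Definition basic :=
  [forall C in circles set0, exists ae : 'I_n * bool, endpt ae.1 ae.2 \in C].

(* labelings (true = x_+, false = x_-) of the circles of s_S(D), encoded as
   functions on nodes constant on circles *)
Definition valid_lab S (f : {ffun node D -> bool}) :=
  [forall u, forall v, nconn S u v ==> (f u == f v)].

Definition labeled := ({set 'I_n} * {ffun node D -> bool})%type.

Definition step : rel labeled := fun a b =>
  let S1 := a.1 in let z1 := a.2 in let S2 := b.1 in let z2 := b.2 in
  [exists A, [&& A \notin S1, S2 == A |: S1, valid_lab S1 z1, valid_lab S2 z2,
     [forall u, ~~ (nconn S1 (endpt A false) u || nconn S1 (endpt A true) u)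
                ==> (z1 u == z2 u)] &
     (if Delta_arc S1 A then
        let a := z1 (endpt A false) in
        let b := z2 (endpt A false) in let c := z2 (endpt A true) in
        (~~ a && ~~ b && ~~ c) || (a && (b != c))
      else if m_arc S1 A then
        let a := z1 (endpt A false) in let b := z1 (endpt A true) in
        let c := z2 (endpt A false) in
        (a && b && c) || ((a != b) && ~~ c)
      else false)]].

Definition lt_lab : rel labeled := fun a b => [exists c, step a c && connect step c b].

Definition interval_count (y x : {ffun node D -> bool}) :=
  #|[pred E : labeled | lt_lab (set0, y) E && lt_lab E (setT, x)]|.

End Defs.

Arguments sedge {n} D.
Arguments nconn {n} D.
Arguments circle {n} D.
Arguments circles {n} D.
Arguments ncirc {n} D.
Arguments endpt {n} D.
Arguments Delta_arc {n} D.
Arguments m_arc {n} D.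
Arguments eta_arc {n} D.
Arguments deg {n} D.
Arguments is_leaf_in {n} D.
Arguments has_leaf {n} D.
Arguments is_coleaf {n} D.
Arguments has_coleaf {n} D.
Arguments basic {n} D.
Arguments valid_lab {n} D.
Arguments labeled {n} D.
Arguments step {n} D.
Arguments lt_lab {n} D.
Arguments interval_count {n} D.

From HB Require Import structures.
From mathcomp Require Import all_boot.
Set Implicit Arguments. Unset Strict Implicit. Unset Printing Implicit Defensive.

(* A basic configuration has no free circles, so an index-2 one is determined
   by the fixed-point free involution [outer D] on the eight ports of its two
   arcs; so are the circles of its four partial resolutions, the graphs G(D) and
   G(D^* ), the valid labelings and the relation between them.  Since each
   generating step surgers one arc, the labelled configurations strictly between
   (D, y) and (s(D), x) are those with one surgered arc that are one step away
   from both ends.  Translated into boolean functions of the involution, the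
   theorem becomes a finite statement, checked by evaluation on each of the 105
   fixed-point free involutions of eight points. *)

Lemma card_undup (T : finType) (s : seq T) : #|s| = size (undup s).
Proof.
by move/card_uniqP: (undup_uniq s) => <-; apply: eq_card => x; rewrite mem_undup.
Qed.

Lemma size_undup_map (T U V : eqType) (f : T -> U) (g : T -> V) (s : seq T) :
  {in s &, forall a b, (f a == f b) = (g a == g b)} ->
  size (undup (map f s)) = size (undup (map g s)).
Proof.
elim: s => [//|a s IHs] fg /=.
have fg_s : {in s &, forall a b, (f a == f b) = (g a == g b)}.
  by move=> u v su sv; apply: fg; rewrite inE ?su ?sv orbT.
have -> : (f a \in map f s) = (g a \in map g s).
  apply/mapP/mapP => -[b sb eq_ab]; exists b => //; apply/eqP;
    [rewrite -fg ?eq_ab // | rewrite fg ?eq_ab //]; by rewrite inE ?sb ?eqxx ?orbT.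
by case: ifP => _ /=; rewrite IHs.
Qed.

Lemma card_count (T : finType) (s : seq T) (P : {pred T}) :
  uniq s -> (forall x, x \in s) -> #|P| = count (mem P) s.
Proof.
move=> uniq_s s_full; rewrite -size_filter.
move/card_uniqP: (filter_uniq (mem P) uniq_s) => <-.
by apply: eq_card => x; rewrite mem_filter s_full andbT.
Qed.

Fixpoint bitseqs n : seq (seq bool) :=
  if n is n'.+1 then [seq false :: b | b <- bitseqs n'] ++ [seq true :: b | b <- bitseqs n']
  else [:: [::]].

Lemma mem_bitseqs n bs : (bs \in bitseqs n) = (size bs == n).
Proof.
elim: n bs => [|n IHn] [|b bs] //=; rewrite mem_cat.
  by apply/negP => /orP[] /mapP[].
have cons_inj c : injective (@cons bool c) by move=> u v [].
case: b; rewrite (mem_map (cons_inj _)) IHn; first by rewrite orb_idl // => /mapP[].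
by rewrite orb_idr // => /mapP[].
Qed.

Lemma uniq_bitseqs n : uniq (bitseqs n).
Proof.
elim: n => [//|n IHn] /=; rewrite cat_uniq !map_inj_uniq ?IHn //; try by move=> u v [].
by rewrite andbT; apply/hasPn => _ /mapP[v _ ->]; apply/mapP => -[].
Qed.

Lemma card_fiber (T1 T2 : finType) (P : pred (T1 * T2)) (t : T1) :
  #|[pred E | P E && (E.1 == t)]| = #|[pred z | P (t, z)]|.
Proof.
have pair_inj : injective (@pair T1 T2 t) by move=> u v [].
rewrite -(card_imset _ pair_inj).
apply: eq_card => -[a b]; rewrite !inE /=.
apply/andP/imsetP => [[P_ab /eqP a_t]|[z P_tz [-> ->]]]; last by rewrite eqxx.
by subst a; exists b.
Qed.

Lemma connect_first (T : finType) (e : rel T) a b :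
  connect e a b -> a = b \/ exists2 c, e a c & connect e c b.
Proof.
case/connectP => [[|c l]] /=; first by left.
by case/andP=> e_ac path_l last_l; right; exists c => //; apply/connectP; exists l.
Qed.

Section Order.
Variables (n : nat) (D : config n).

Lemma step_card (a b : labeled D) : step D a b -> #|b.1| = #|a.1|.+1.
Proof.
case: a b => [S1 z1] [S2 z2] /existsP[A /and3P[notin_A /eqP -> _]].
by rewrite cardsU1 notin_A.
Qed.

Lemma connect_step_card (a b : labeled D) :
  connect (step D) a b -> a = b \/ #|a.1| < #|b.1|.
Proof.
case/connectP => l; elim: l a => [|c l IHl] a /=; first by move=> _ ->; left.
case/andP=> step_ac path_l last_l; right; rewrite -ltnS -(step_card step_ac).
by case: (IHl c path_l last_l) => [<-|/ltnW].
Qed.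

Lemma lt_lab_card (a b : labeled D) : lt_lab D a b -> #|a.1| < #|b.1|.
Proof.
case/existsP=> c /andP[/step_card card_c]; rewrite -ltnS -card_c.
by case/connect_step_card => [<-|/ltnW].
Qed.

Lemma lt_lab_succ (a b : labeled D) : #|b.1| = #|a.1|.+1 -> lt_lab D a b = step D a b.
Proof.
move=> card_b; apply/existsP/idP => [[c /andP[step_ac conn_cb]]|step_ab]; last first.
  by exists b; rewrite step_ab connect0.
case: (connect_step_card conn_cb) => [<- //|].
by rewrite card_b (step_card step_ac) ltnn.
Qed.

End Order.

Lemma basic_nfree n (D : config n) : basic D -> nfree D = 0.
Proof.
move=> /forallP basic_D; case free_D: (nfree D) => [//|k].
have lt0_free : 0 < nfree D by rewrite free_D.
have := basic_D (circle D set0 (inr (Ordinal lt0_free))).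
by rewrite imset_f // => /existsP[[A e]]; rewrite inE.
Qed.

Lemma cardT2 : #|[set: 'I_2]| = 2.
Proof. by rewrite cardsT card_ord. Qed.

Section Interval.
Variables (D : config 2) (y x : {ffun node D -> bool}).

Lemma interval_count_steps :
  interval_count D y x = #|[pred E | step D (set0, y) E && step D E (setT, x)]|.
Proof.
apply: eq_card => -[S z]; rewrite !inE.
have [card_S|card_S] := eqVneq #|S| 1.
  by rewrite !lt_lab_succ //= ?cards0 ?cardT2 ?card_S.
have no_step : ~~ step D (set0, y) (S, z).
  by apply/negP => /step_card /=; rewrite cards0 => /eqP; rewrite (negbTE card_S).
have no_lt : ~~ (lt_lab D (set0, y) (S, z) && lt_lab D (S, z) (setT, x)).
  apply/andP => -[/lt_lab_card lt_yE /lt_lab_card lt_Ex]; move: lt_yE lt_Ex card_S.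
  by rewrite /= cards0 cardT2; case: #|S| => [|[|[]]].
by rewrite (negbTE no_step) (negbTE no_lt).
Qed.

Lemma interval_count_gt0 :
  connect (step D) (set0, y) (setT, x) -> 0 < interval_count D y x.
Proof.
case/connect_first => [[/setP/(_ ord0)] | [E step_yE conn_Ex]]; first by rewrite !inE.
have card_E : #|E.1| = 1 by rewrite (step_card step_yE) cards0.
case: (connect_first conn_Ex) => [E_x|[F step_EF conn_Fx]].
  by move: card_E; rewrite E_x cardT2.
apply/card_gt0P; exists E; rewrite !inE; apply/andP; split; apply/existsP.
  by exists E; rewrite step_yE connect0.
by exists F; rewrite step_EF.
Qed.

End Interval.

Definition arc0 : 'I_2 := @Ordinal 2 0 isT.
Definition arc1 : 'I_2 := @Ordinal 2 1 isT.

Lemma arc2P (A : 'I_2) : A = arc0 \/ A = arc1.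
Proof. by case: A => [[|[|//]] ltA]; [left|right]; apply: val_inj. Qed.

Lemma arc_neq_eq (A B C : 'I_2) : B != A -> C != A -> C = B.
Proof. by case: (arc2P A) => ->; case: (arc2P B) => ->; case: (arc2P C) => ->. Qed.

Definition ports : seq (port 2) :=
  [:: (arc0, false, false); (arc0, false, true); (arc0, true, false); (arc0, true, true);
      (arc1, false, false); (arc1, false, true); (arc1, true, false); (arc1, true, true)].

Definition port_index (p : port 2) : nat :=
  let: (A, e, s) := p in val A * 4 + e * 2 + s.

Definition port_at (i : nat) : port 2 := nth (arc0, false, false) ports i.

Lemma port_indexK : cancel port_index port_at.
Proof. by case=> [[A e] s]; case: (arc2P A) => ->; case: e; case: s. Qed.

Lemma port_index_lt p : port_index p < 8.
Proof. by case: p => [[A e] s]; case: (arc2P A) => ->; case: e; case: s. Qed.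

Lemma port_atK i : i < 8 -> port_index (port_at i) = i.
Proof. by do 8?[case: i => [//|i]]. Qed.

Lemma mem_ports p : p \in ports.
Proof. by rewrite -[p]port_indexK mem_nth // port_index_lt. Qed.

Lemma nth_map_ports (T : Type) (x0 : T) (f : port 2 -> T) p :
  nth x0 (map f ports) (port_index p) = f p.
Proof.
by rewrite (nth_map (arc0, false, false)) ?port_index_lt // -/(port_at _) port_indexK.
Qed.

(* A state (b0, b1) stands for the partial resolution in which arc0 (resp. arc1)
   has been surgered iff b0 (resp. b1). *)
Definition surgered (s : bool * bool) (A : 'I_2) : bool :=
  if val A is 0 then s.1 else s.2.

Definition state_of (S : {set 'I_2}) : bool * bool := (arc0 \in S, arc1 \in S).

Definition s00 := (false, false). Definition s10 := (true, false).
Definition s01 := (false, true).  Definition s11 := (true, true).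

Lemma state_of0 : state_of set0 = s00. Proof. by rewrite /state_of !inE. Qed.
Lemma state_ofT : state_of setT = s11. Proof. by rewrite /state_of !inE. Qed.
Lemma state_of_arc0 : state_of [set arc0] = s10. Proof. by rewrite /state_of !inE. Qed.
Lemma state_of_arc1 : state_of [set arc1] = s01. Proof. by rewrite /state_of !inE. Qed.

Lemma surgered_state S A : surgered (state_of S) A = (A \in S).
Proof. by case: (arc2P A) => ->. Qed.

Definition inner_at (s : bool * bool) (p : port 2) : port 2 :=
  let: (A, e, b) := p in if surgered s A then (A, ~~ e, ~~ b) else (A, e, ~~ b).

Lemma inner_state S p : inner S p = inner_at (state_of S) p.
Proof. by case: p => [[A e] b] /=; rewrite surgered_state. Qed.

Lemma inner_atK s : involutive (inner_at s).
Proof. by case=> [[A e] b] /=; case: ifP => /= ->; rewrite !negbK. Qed.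

Definition table_fun (t : seq (port 2)) (p : port 2) : port 2 := nth p t (port_index p).

Lemma table_funE f : table_fun (map f ports) =1 f.
Proof. by move=> p; apply: nth_map_ports. Qed.

Section CircleIds.
Variable o : port 2 -> port 2.
Hypothesis o_invol : involutive o.

Definition sedge_at (s : bool * bool) : rel (port 2) :=
  fun p q => (q == o p) || (q == inner_at s p).

Lemma sedge_at_sym s : symmetric (sedge_at s).
Proof.
move=> p q; rewrite /sedge_at.
by rewrite !(eq_sym q) (can2_eq o_invol o_invol) (can2_eq (inner_atK s) (inner_atK s)).
Qed.

Definition expand s (l : seq nat) : seq nat :=
  undup (l ++ flatten [seq [:: port_index (o (port_at j));
                               port_index (inner_at s (port_at j))] | j <- l]).

Definition reach s p : seq nat := iter 8 (expand s) [:: port_index p].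

(* The least index of a port reached from p; it identifies the circle through
   p once its edge invariance certifies that [reach] is saturated. *)
Definition circle_id s p : nat := head 0 [seq j <- iota 0 8 | j \in reach s p].

Definition edge_invariant (T : eqType) s (f : port 2 -> T) : bool :=
  all (fun p => (f (o p) == f p) && (f (inner_at s p) == f p)) ports.

Lemma edge_invariant_connect (T : eqType) s (f : port 2 -> T) p q :
  edge_invariant s f -> connect (sedge_at s) p q -> f p = f q.
Proof.
move=> /allP f_inv /connectP[l]; elim: l p => [|r l IHl] p /=; first by move=> _ ->.
case/andP=> /orP[]/eqP -> path_l last_l; rewrite -(IHl _ path_l last_l);
  by case/andP: (f_inv p (mem_ports p)) => /eqP o_f /eqP in_f; rewrite ?o_f ?in_f.
Qed.

Lemma reach_connect s p j : j \in reach s p -> connect (sedge_at s) p (port_at j).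
Proof.
rewrite /reach; elim: 8 j => [|n IHn] j /=.
  by rewrite inE => /eqP ->; rewrite port_indexK connect0.
rewrite mem_undup mem_cat => /orP[/IHn //|/flattenP[l /mapP[i Hi ->]]].
rewrite !inE => /orP[]/eqP ->; rewrite port_indexK;
  apply: connect_trans (IHn _ Hi) (connect1 _); by rewrite /sedge_at eqxx ?orbT.
Qed.

Lemma reach_self s p : port_index p \in reach s p.
Proof.
rewrite /reach; elim: 8 => [|n IHn] /=; first exact: mem_head.
by rewrite mem_undup mem_cat IHn.
Qed.

Lemma circle_id_reach s p : circle_id s p \in reach s p.
Proof.
rewrite /circle_id.
have : port_index p \in [seq j <- iota 0 8 | j \in reach s p].
  by rewrite mem_filter mem_iota port_index_lt reach_self.
by case: filter (filter_all (mem (reach s p)) (iota 0 8)) => [//|j l] /= /andP[].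
Qed.

Lemma circle_id_connect s p q : edge_invariant s (circle_id s) ->
  (circle_id s p == circle_id s q) = connect (sedge_at s) p q.
Proof.
move=> inv_s; have sym_s := sym_connect_sym (sedge_at_sym s).
have to_id r : connect (sedge_at s) r (port_at (circle_id s r)).
  exact: reach_connect (circle_id_reach s r).
apply/eqP/idP => [eq_id|]; last exact: edge_invariant_connect.
by apply: connect_trans (to_id p) _; rewrite eq_id sym_s to_id.
Qed.

End CircleIds.

Definition arc_ends : seq ('I_2 * bool) :=
  [:: (arc0, false); (arc0, true); (arc1, false); (arc1, true)].

Definition end_port (A : 'I_2) (e : bool) : port 2 := (A, e, false).

Definition lab (bs : seq bool) (p : port 2) : bool := nth false bs (port_index p).

Section Census.
Variables (o : port 2 -> port 2) (cid : bool * bool -> port 2 -> nat).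

Definition ncirc_of s : nat := size (undup (map (cid s) ports)).

Definition valid_of s (bs : seq bool) : bool := edge_invariant o s (lab bs).

Definition deg_of s p : nat :=
  count (fun ae : 'I_2 * bool => cid s (end_port ae.1 ae.2) == cid s p) arc_ends.

Definition coleaf_of A : bool := has (fun e => deg_of s11 (end_port A e) == 1) [:: false; true].

Definition step_of s1 (n1 n2 : nat) A (b1 b2 : seq bool) : bool :=
  all (fun p => ~~ ((cid s1 (end_port A false) == cid s1 p)
                    || (cid s1 (end_port A true) == cid s1 p)) ==> (lab b1 p == lab b2 p)) ports
  && (if n2 == n1.+1 then
        let a := lab b1 (end_port A false) in
        let b := lab b2 (end_port A false) in let c := lab b2 (end_port A true) in
        (~~ a && ~~ b && ~~ c) || (a && (b != c))
      else if n2.+1 == n1 then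
        let a := lab b1 (end_port A false) in let b := lab b1 (end_port A true) in
        let c := lab b2 (end_port A false) in
        (a && b && c) || ((a != b) && ~~ c)
      else false).

Definition interval_of (mid10 mid01 : seq (seq bool)) y x : nat :=
  let n00 := ncirc_of s00 in let n10 := ncirc_of s10 in
  let n01 := ncirc_of s01 in let n11 := ncirc_of s11 in
  count (fun z => step_of s00 n00 n10 arc0 y z && step_of s10 n10 n11 arc1 z x) mid10
  + count (fun z => step_of s00 n00 n01 arc1 y z && step_of s01 n01 n11 arc0 z x) mid01.

Definition conclusion_of k (y x : seq bool) : bool :=
  [|| (has (fun p => deg_of s00 p == 1) ports || (coleaf_of arc0 || coleaf_of arc1)) && (k == 2),
      [&& ncirc_of s00 == 2, cid s00 (end_port arc0 false) != cid s00 (end_port arc0 true),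
          cid s00 (end_port arc1 false) != cid s00 (end_port arc1 true) & k == 2]
    | [&& ncirc_of s00 == 1, ncirc_of s10 == (ncirc_of s00).+1,
          ncirc_of s01 == (ncirc_of s00).+1, ~~ coleaf_of arc0 && ~~ coleaf_of arc1,
          k == 4, all (lab y) ports, ncirc_of s11 == 1 & all (fun p => ~~ lab x p) ports]].

Definition theorem6_on (val00 val10 val01 val11 : seq (seq bool)) : bool :=
  all (fun y => all (fun x => let k := interval_of val10 val01 y x in
                              (0 < k) ==> conclusion_of k y x) val11) val00.

Definition theorem6_of : bool :=
  (ncirc_of s10 != ncirc_of s00) && (ncirc_of s01 != ncirc_of s00) ==>
  theorem6_on (filter (valid_of s00) (bitseqs 8)) (filter (valid_of s10) (bitseqs 8))
    (filter (valid_of s01) (bitseqs 8)) (filter (valid_of s11) (bitseqs 8)).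

End Census.

(* [circle_id] tabulated once per state, so that evaluation does not
   recompute it for every labeling. *)
Definition circle_tab (o : port 2 -> port 2) : bool * bool -> port 2 -> nat :=
  let t00 := map (circle_id o s00) ports in let t10 := map (circle_id o s10) ports in
  let t01 := map (circle_id o s01) ports in let t11 := map (circle_id o s11) ports in
  fun s p => nth 0 (if s.1 then if s.2 then t11 else t10 else if s.2 then t01 else t00)
                 (port_index p).

Lemma circle_tabE o s p : circle_tab o s p = circle_id o s p.
Proof. by case: s => [[] []]; apply: nth_map_ports. Qed.

Definition check_outer (o : port 2 -> port 2) : bool :=
  let cid := circle_tab o in
  [&& all (fun s => edge_invariant o s (cid s)) [:: s00; s10; s01; s11]
    & theorem6_of o cid].

(* The table t of the images of the first [size t] ports extends by p, the
   image of the next port, to (a prefix of) a fixed-point free involution. *)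
Definition extends_invol (t : seq (port 2)) (p : port 2) : bool :=
  let i := size t in
  (p != port_at i) && all (fun j => (nth p t j == port_at i) == (p == port_at j)) (iota 0 i).

(* [if] rather than [==>]: evaluation is call-by-value, so [==>] would not prune. *)
Fixpoint check_extensions (n : nat) (t : seq (port 2)) : bool :=
  if n is n'.+1 then
    all (fun p => if extends_invol t p then check_extensions n' (rcons t p) else true) ports
  else check_outer (table_fun t).

Lemma check_extensions_all : check_extensions 8 [::].
Proof. by vm_compute. Qed.

Lemma check_extensions_sound (o : port 2 -> port 2) n k :
  involutive o -> (forall p, o p != p) -> n + k = 8 ->
  check_extensions n (take k (map o ports)) -> check_outer (table_fun (map o ports)).
Proof.
move=> o_invol o_fpf; elim: n k => [|n IHn] k.
  by rewrite add0n => ->; rewrite take_oversize ?size_map.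
move=> nk8 /allP/(_ (o (port_at k)) (mem_ports _)).
have lt_k8 : k < 8 by rewrite -nk8 addSn ltnS leq_addl.
have -> : extends_invol (take k (map o ports)) (o (port_at k)).
  rewrite /extends_invol size_take size_map lt_k8 o_fpf; apply/allP => j.
  rewrite mem_iota => /andP[_ lt_jk]; have lt_j8 := ltn_trans lt_jk lt_k8.
  rewrite nth_take // (nth_map (port_at k)) // (set_nth_default (arc0, false, false)) //.
  by rewrite (can2_eq o_invol o_invol) (eq_sym (port_at j)).
rewrite -(nth_map (arc0, false, false) (arc0, false, false) o) // -take_nth ?size_map //.
by apply: IHn; rewrite addnS.
Qed.

Lemma check_outer_connect o : involutive o -> check_outer o ->
  forall s p q, (circle_tab o s p == circle_tab o s q) = connect (sedge_at o s) p q.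
Proof.
move=> o_invol /andP[/allP inv _] s p q; rewrite !circle_tabE circle_id_connect //.
have <- : edge_invariant o s (circle_tab o s) = edge_invariant o s (circle_id o s).
  by apply: eq_all => r; rewrite !circle_tabE.
by apply: inv; case: s => [[] []].
Qed.

Section Transfer.
Variables (D : config 2) (o : port 2 -> port 2) (cid : bool * bool -> port 2 -> nat).
Hypothesis nfree0 : nfree D = 0.
Hypothesis outer_o : outer D =1 o.
Hypothesis cid_connect :
  forall s p q, (cid s p == cid s q) = connect (sedge_at o s) p q.

Lemma node_port (u : node D) : exists p, u = inl p.
Proof. by case: u => [p|i]; [exists p | have := ltn_ord i; rewrite {2}nfree0]. Qed.

Lemma connect_sedge S : connect (sedge D S) =2 connect (sedge_at o (state_of S)).
Proof. by apply: eq_connect => p q; rewrite /sedge /sedge_at outer_o inner_state. Qed.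

Lemma connect_cid S p q :
  connect (sedge D S) p q = (cid (state_of S) p == cid (state_of S) q).
Proof. by rewrite cid_connect connect_sedge. Qed.

Lemma circle_port_eq S p q :
  (circle D S (inl p) == circle D S (inl q)) = (cid (state_of S) p == cid (state_of S) q).
Proof.
apply/eqP/eqP => [eq_pq|eq_pq].
  have : inl q \in circle D S (inl p) by rewrite eq_pq inE /= connect_cid.
  by rewrite inE /= connect_cid => /eqP.
apply/setP => u; case: (node_port u) => r ->; by rewrite !inE /= !connect_cid eq_pq.
Qed.

Lemma ncirc_ports S : ncirc D S = ncirc_of cid (state_of S).
Proof.
have -> : ncirc D S = #|map (fun p => circle D S (inl p)) ports|.
  apply: eq_card => C; apply/imsetP/mapP => [[u _ ->]|[p _ ->]]; last by exists (inl p).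
  by case: (node_port u) => p ->; exists p; rewrite ?mem_ports.
by rewrite card_undup; apply: size_undup_map => p q _ _; apply: circle_port_eq.
Qed.

Lemma deg_port S p : deg D (circle D S (inl p)) = deg_of cid (state_of S) p.
Proof.
rewrite /deg (@card_count _ arc_ends) //; last by case=> A e; case: (arc2P A) => ->; case: e.
by apply: eq_count => ae; rewrite !inE /= connect_cid eq_sym.
Qed.

Lemma has_leaf_ports : has_leaf D = has (fun p => deg_of cid s00 p == 1) ports.
Proof.
apply/existsP/hasP => [[C /andP[/imsetP[u _ ->] leaf_u]]|[p _ leaf_p]].
  case: (node_port u) leaf_u => p -> leaf_p.
  by exists p; rewrite ?mem_ports -?state_of0 -?deg_port.
exists (circle D set0 (inl p)); rewrite /is_leaf_in deg_port state_of0 leaf_p andbT.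
exact: imset_f.
Qed.

Lemma is_coleaf_ports A : is_coleaf D A = coleaf_of cid A.
Proof.
apply/existsP/hasP => [[e /andP[_ leaf_e]]|[e _ leaf_e]].
  by exists e; [case: (e) | rewrite -state_ofT -deg_port].
by exists e; rewrite /is_leaf_in /endpt deg_port state_ofT leaf_e andbT imset_f.
Qed.

Lemma has_coleaf_ports : has_coleaf D = coleaf_of cid arc0 || coleaf_of cid arc1.
Proof.
apply/existsP/orP => [[A]|[coleaf0|coleaf1]].
- by rewrite is_coleaf_ports; case: (arc2P A) => ->; [left|right].
- by exists arc0; rewrite is_coleaf_ports.
- by exists arc1; rewrite is_coleaf_ports.
Qed.

Definition bits (f : {ffun node D -> bool}) : seq bool := map (fun p => f (inl p)) ports.

Lemma lab_bits f p : lab (bits f) p = f (inl p).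
Proof. exact: nth_map_ports. Qed.

Lemma valid_lab_ports S f : valid_lab D S f = valid_of o (state_of S) (bits f).
Proof.
apply/forallP/allP => [f_valid p _|f_inv u].
  have edge q : sedge_at o (state_of S) p q -> f (inl p) = f (inl q).
    move=> e_pq; apply/eqP; have /forallP/(_ (inl q))/implyP := f_valid (inl p).
    by apply; rewrite /= connect_sedge connect1.
  have e_o : sedge_at o (state_of S) p (o p) by rewrite /sedge_at eqxx.
  have e_in : sedge_at o (state_of S) p (inner_at (state_of S) p).
    by rewrite /sedge_at eqxx orbT.
  by rewrite !lab_bits -(edge _ e_o) -(edge _ e_in) !eqxx.
apply/forallP => v; case: (node_port u) (node_port v) => p -> [q ->].
apply/implyP; rewrite /= connect_sedge -!lab_bits => conn_pq.
by apply/eqP/(edge_invariant_connect _ conn_pq)/allP.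
Qed.

Lemma step_ports S1 z1 S2 z2 : step D (S1, z1) (S2, z2) =
  [exists A, [&& A \notin S1, S2 == A |: S1, valid_of o (state_of S1) (bits z1),
     valid_of o (state_of S2) (bits z2) &
     step_of cid (state_of S1) (ncirc_of cid (state_of S1)) (ncirc_of cid (state_of S2))
       A (bits z1) (bits z2)]].
Proof.
apply: eq_existsb => A; rewrite /step /=.
case: eqP => [->|_]; last by rewrite /= andbF.
rewrite !valid_lab_ports /Delta_arc /m_arc !ncirc_ports /step_of /endpt /end_port !lab_bits.
congr (_ && (_ && (_ && (_ && (_ && _))))).
apply/forallP/allP => [agree p _|agree u].
  by have := agree (inl p); rewrite !connect_cid !lab_bits.
case: (node_port u) => p ->; have := agree p (mem_ports p).
by rewrite /= !connect_cid !lab_bits.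
Qed.

Definition of_bits (bs : seq bool) : {ffun node D -> bool} :=
  [ffun u => if u is inl p then lab bs p else false].

Lemma of_bitsK bs : size bs = 8 -> bits (of_bits bs) = bs.
Proof.
move=> size_bs; apply: (@eq_from_nth _ false); rewrite size_map ?size_bs // => i lt_i8.
by rewrite (nth_map (arc0, false, false)) // ffunE /lab -/(port_at i) port_atK.
Qed.

Lemma bitsK : cancel bits of_bits.
Proof.
by move=> f; apply/ffunP => u; rewrite ffunE; case: (node_port u) => p ->; rewrite lab_bits.
Qed.

Lemma card_bits (Q : pred (seq bool)) :
  #|[pred f : {ffun node D -> bool} | Q (bits f)]| = count Q (bitseqs 8).
Proof.
rewrite (@card_count _ (map of_bits (bitseqs 8))).
- rewrite count_map; apply: eq_in_count => bs; rewrite mem_bitseqs => /eqP size_bs.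
  by rewrite /preim /= inE of_bitsK.
- rewrite map_inj_in_uniq ?uniq_bitseqs // => u v.
  rewrite !mem_bitseqs => /eqP size_u /eqP size_v eq_uv.
  by rewrite -(of_bitsK size_u) eq_uv of_bitsK.
by move=> f; rewrite -(bitsK f) map_f // mem_bitseqs size_map.
Qed.

Section Endpoints.
Variables (y x : {ffun node D -> bool}).
Hypothesis valid_y : valid_lab D set0 y.
Hypothesis valid_x : valid_lab D setT x.

Lemma step_from_bottom A z : step D (set0, y) ([set A], z) =
  valid_of o (state_of [set A]) (bits z)
  && step_of cid s00 (ncirc_of cid s00) (ncirc_of cid (state_of [set A])) A (bits y) (bits z).
Proof.
rewrite step_ports -valid_lab_ports valid_y state_of0.
apply/existsP/idP => [[A' /and5P[_ /eqP eq_A _ valid_z step_A]]|/andP[valid_z step_A]].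
  by move: eq_A step_A; rewrite setU0 valid_z => /set1_inj ->.
by exists A; rewrite inE setU0 eqxx valid_z.
Qed.

Lemma step_to_top A B z : B != A -> step D ([set A], z) (setT, x) =
  valid_of o (state_of [set A]) (bits z)
  && step_of cid (state_of [set A]) (ncirc_of cid (state_of [set A])) (ncirc_of cid s11)
       B (bits z) (bits x).
Proof.
move=> B_A; have setT_AB : [set: 'I_2] = B |: [set A].
  apply/setP => C; rewrite !inE.
  by case: (arc2P A) B_A => ->; case: (arc2P B) => ->; case: (arc2P C) => ->.
rewrite step_ports -[valid_of _ (state_of setT) _]valid_lab_ports valid_x state_ofT.
apply/existsP/idP => [[A' /and5P[notin_A' _ valid_z _ step_A']]|/andP[valid_z step_B]].
  by move: notin_A'; rewrite inE => /(arc_neq_eq B_A) <-; rewrite valid_z.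
by exists B; rewrite inE B_A -setT_AB eqxx valid_z.
Qed.

Lemma card_middle A B : B != A ->
  #|[pred z | step D (set0, y) ([set A], z) && step D ([set A], z) (setT, x)]| =
  count (fun bs =>
           step_of cid s00 (ncirc_of cid s00) (ncirc_of cid (state_of [set A])) A (bits y) bs
           && step_of cid (state_of [set A]) (ncirc_of cid (state_of [set A]))
                (ncirc_of cid s11) B bs (bits x))
        (filter (valid_of o (state_of [set A])) (bitseqs 8)).
Proof.
move=> B_A; rewrite count_filter -card_bits; apply: eq_card => z.
by rewrite !inE /= step_from_bottom (step_to_top _ B_A) andbACA andbb andbC.
Qed.

Lemma middle_arcs E : step D (set0, y) E -> E.1 = [set arc0] \/ E.1 = [set arc1].
Proof.
case: E => S z; rewrite step_ports => /existsP[A /and3P[_ /eqP -> _]].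
by rewrite setU0; case: (arc2P A) => ->; [left|right].
Qed.

Lemma interval_count_ports : interval_count D y x =
  interval_of cid (filter (valid_of o s10) (bitseqs 8)) (filter (valid_of o s01) (bitseqs 8))
    (bits y) (bits x).
Proof.
have arc10 : arc1 != arc0 by []. have arc01 : arc0 != arc1 by [].
rewrite interval_count_steps -(cardID [pred E : labeled D | E.1 == [set arc0]]).
rewrite /interval_of -state_of_arc0 -state_of_arc1 -(card_middle arc10) -(card_middle arc01).
pose P (E : labeled D) := step D (set0, y) E && step D E (setT, x).
congr (_ + _);
  [apply: etrans _ (card_fiber P [set arc0]) | apply: etrans _ (card_fiber P [set arc1])];
  apply: eq_card => -[S z]; rewrite !inE /P //=.
have [step_yE|] := boolP (step D (set0, y) (S, z)); last by rewrite /= andbF.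
by case: (middle_arcs step_yE) => /= ->;
  rewrite ?eqxx ?(inj_eq set1_inj) ?(negbTE arc01) ?arc10 ?andbF ?andbT //=.
Qed.

Lemma all_ports_bits (f : {ffun node D -> bool}) (P : pred bool) :
  all (fun p => P (lab (bits f) p)) ports -> forall u, P (f u).
Proof. by move/allP=> P_f u; case: (node_port u) => p ->; rewrite -lab_bits P_f ?mem_ports. Qed.

Lemma conclusion_of_theorem6 : theorem6_of o cid -> (forall A, ~~ eta_arc D set0 A) ->
  connect (step D) (set0, y) (setT, x) ->
  conclusion_of cid (interval_count D y x) (bits y) (bits x).
Proof.
move=> thm6 no_eta /interval_count_gt0; rewrite interval_count_ports.
have no_eta_arc A : ncirc_of cid (state_of [set A]) != ncirc_of cid s00.
  by have := no_eta A; rewrite /eta_arc !ncirc_ports setU0 state_of0.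
move/implyP: thm6; rewrite -state_of_arc0 -state_of_arc1 !no_eta_arc => /(_ isT) thm6.
have y_val : bits y \in filter (valid_of o s00) (bitseqs 8).
  by rewrite mem_filter -state_of0 -valid_lab_ports valid_y mem_bitseqs size_map.
have x_val : bits x \in filter (valid_of o s11) (bitseqs 8).
  by rewrite mem_filter -state_ofT -valid_lab_ports valid_x mem_bitseqs size_map.
by move/allP/(_ _ y_val)/allP/(_ _ x_val)/implyP: thm6; rewrite state_of_arc0 state_of_arc1.
Qed.

Lemma conclusion_ports : conclusion_of cid (interval_count D y x) (bits y) (bits x) ->
  ((has_leaf D || has_coleaf D) /\ interval_count D y x = 2)
  \/ ((ncirc D set0 = 2 /\
       (forall A : 'I_2, circle D set0 (endpt D A false) != circle D set0 (endpt D A true)))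
      /\ interval_count D y x = 2)
  \/ ((ncirc D set0 = 1 /\ (forall A : 'I_2, Delta_arc D set0 A)
       /\ (forall A : 'I_2, ~~ is_coleaf D A))
      /\ interval_count D y x = 4
      /\ (forall u, y u = true)
      /\ ncirc D setT = 1 /\ (forall u, x u = false)).
Proof.
rewrite /conclusion_of -has_leaf_ports -has_coleaf_ports.
rewrite -state_of0 -state_of_arc0 -state_of_arc1 -state_ofT -!ncirc_ports.
case/or3P=> [/andP[leaf /eqP k2]|/and4P[/eqP n2 sep0 sep1 /eqP k2]|].
- by left.
- right; left; split=> //; split=> // A; rewrite /endpt circle_port_eq.
  by case: (arc2P A) => ->.
case/and5P=> /eqP n1 Delta0 Delta1 /andP[no_coleaf0 no_coleaf1].
case/and4P=> /eqP k4 y_top /eqP nT1 x_bot; right; right.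
have Delta A : Delta_arc D set0 A by rewrite /Delta_arc setU0; case: (arc2P A) => ->.
have no_coleaf A : ~~ is_coleaf D A by rewrite is_coleaf_ports; case: (arc2P A) => ->.
have y_all u : y u = true by apply: (@all_ports_bits y id).
have x_none u : x u = false by apply/negbTE/(@all_ports_bits x negb).
by repeat split.
Qed.

End Endpoints.

End Transfer.

Theorem mainTheorem6 (D : config 2) (x y : {ffun node D -> bool}) :
  basic D ->
  (forall A : 'I_2, ~~ eta_arc D set0 A) ->
  valid_lab D set0 y -> valid_lab D setT x ->
  connect (step D) (set0, y) (setT, x) ->
  ((has_leaf D || has_coleaf D) /\ interval_count D y x = 2)
  \/ ((ncirc D set0 = 2 /\
       (forall A : 'I_2, circle D set0 (endpt D A false) != circle D set0 (endpt D A true)))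
      /\ interval_count D y x = 2)
  \/ ((ncirc D set0 = 1 /\ (forall A : 'I_2, Delta_arc D set0 A)
       /\ (forall A : 'I_2, ~~ is_coleaf D A))
      /\ interval_count D y x = 4
      /\ (forall u, y u = true)
      /\ ncirc D setT = 1 /\ (forall u, x u = false)).
Proof.
move=> basic_D no_eta valid_y valid_x conn_yx.
have nfree0 := basic_nfree basic_D.
pose o := table_fun (map (outer D) ports).
have outer_o : outer D =1 o by move=> p; rewrite /o table_funE.
have o_invol : involutive o by move=> p; rewrite -!outer_o outer_invol.
have check_o : check_outer o.
  apply: (@check_extensions_sound _ 8 0 (@outer_invol _ D) (@outer_fpf _ D) erefl).
  by rewrite take0; apply: check_extensions_all.
have cid_connect := check_outer_connect o_invol check_o.
apply: (conclusion_ports nfree0 outer_o cid_connect).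
apply: (conclusion_of_theorem6 nfree0 outer_o cid_connect valid_y valid_x _ no_eta conn_yx).
by case/andP: check_o.
Qed.
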